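(* Let $\mathcal A_{IV}$ be the algebra of Laurent polynomials in $a_{IV},b_{IV},c_{IV},d_{IV},e_{IV},f_{IV},h_{IV}$ with the log-canonical bracket (writing $a,\dots,h$ for the $IV$-variables) $\{a,b\}=0,\ \{a,c\}=-\tfrac12 ac,\ \{a,d\}=-\tfrac12 ad,\ \{a,e\}=0,\ \{a,f\}=\tfrac12 af,\ \{a,h\}=\tfrac12 ah,$ $\{b,c\}=\tfrac14 bc,\ \{b,d\}=0,\ \{b,e\}=\tfrac14 be,\ \{b,f\}=\tfrac14 bf,\ \{b,h\}=-\tfrac14 bh,$ $\{c,d\}=-\tfrac14 cd,\ \{c,e\}=\tfrac14 ce,\ \{c,f\}=0,\ \{c,h\}=\tfrac14 ch,$ $\{d,e\}=-\tfrac14 de,\ \{d,f\}=\tfrac14 df,\ \{d,h\}=\tfrac14 dh,\ \{e,f\}=-\tfrac14 ef,\ \{e,h\}=0,\ \{f,h\}=\tfrac14 fh$. Let $\mathcal A_{II}$ be the algebra of Laurent polynomials in $a,b,c,d,e,f,g,h,i$ with the log-canonical bracket $\{a,b\}=0,\ \{a,c\}=-\tfrac14 ac,\ \{a,d\}=-\tfrac14 ad,\ \{a,e\}=0,\ \{a,f\}=\tfrac14 af,\ \{a,g\}=-\tfrac14 ag,\ \{a,h\}=\tfrac14 ah,\ \{a,i\}=\tfrac14 ai,$ $\{b,c\}=\tfrac14 bc,\ \{b,d\}=0,\ \{b,e\}=\tfrac14 be,\ \{b,f\}=\tfrac14 bf,\ \{b,g\}=0,\ \{b,h\}=-\tfrac14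 bh,\ \{b,i\}=0,$ $\{c,d\}=-\tfrac14 cd,\ \{c,e\}=\tfrac14 ce,\ \{c,f\}=-\tfrac14 cf,\ \{c,g\}=\{c,h\}=0,\ \{c,i\}=\tfrac14 ci,$ $\{d,e\}=-\tfrac14 de,\ \{d,f\}=\{d,g\}=\{d,h\}=0,\ \{d,i\}=\tfrac14 di,$ $\{e,f\}=-\tfrac14 ef,\ \{e,g\}=\{e,h\}=\{e,i\}=0,$ $\{f,g\}=-\tfrac14 fg,\ \{f,h\}=\tfrac14 fh,\ \{f,i\}=0,\ \{g,h\}=\tfrac14 gh,\ \{g,i\}=-\tfrac14 gi,\ \{h,i\}=0$. Then the assignment $a_{IV}\mapsto ag$, $b_{IV}\mapsto b$, $c_{IV}\mapsto cg$, $d_{IV}\mapsto dg$, $e_{IV}\mapsto e$, $f_{IV}\mapsto f$, $h_{IV}\mapsto h$ defines an injective Poisson homomorphism $\mathcal A_{IV}\to\mathcal A_{II}$, realising $\mathcal A_{IV}$ as a Poisson subalgebra of $\mathcal A_{II}$.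
   Context: A log-canonical bracket is extended from the generators to all Laurent polynomials by bilinearity, antisymmetry and the Leibniz rule. *)

(* Laurent polynomials in n variables over a field K are
   finitely supported functions 'rV[int]_n -> K, i.e. the monoid-algebra
   carrier {malg K['rV[int]_n]} of multinomials' monalg (which provides the
   K-vector space structure; multiplication is defined below by hand since
   monalg's ring structure only exists for monomials without inverses). *)
From HB Require Import structures.
From mathcomp Require Import all_boot all_order all_algebra.
From mathcomp Require Import finmap.
From mathcomp.multinomials Require Import monalg.
Set Implicit Arguments. Unset Strict Implicit. Unset Printing Implicit Defensive.
Import Order.TTheory GRing.Theory Num.Theory.
Local Open Scope ring_scope.

Notation expo n := 'rV[int]_n.
Notation laurent K n := {malg K[expo n]}.

Section Laurent.
Variables (K : fieldType) (n : nat).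

Definition lmono (c : K) (a : expo n) : laurent K n := << c *g a >>.

Definition lone : laurent K n := lmono 1 0.

Definition lmul (p q : laurent K n) : laurent K n :=
  \sum_(a <- msupp p) \sum_(b <- msupp q) lmono (p@_a * q@_b) (a + b).

Definition lpair (Om : 'M[K]_n) (a b : expo n) : K :=
  \sum_(i < n) \sum_(j < n) (a ord0 i)%:~R * (b ord0 j)%:~R * Om i j.

(* The log-canonical bracket with (skew-symmetric) coefficient matrix Om,
   i.e. {x_i, x_j} = Om i j * x_i x_j on generators, extended to all
   Laurent polynomials by bilinearity, antisymmetry and Leibniz rule.
   On monomials the Leibniz rule (also for inverses) forces
   {x^a, x^b} = (a^T Om b) x^(a+b); extending bilinearly gives: *)
Definition lbracket (Om : 'M[K]_n) (p q : laurent K n) : laurent K n :=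
  \sum_(a <- msupp p) \sum_(b <- msupp q)
     lmono (p@_a * q@_b * lpair Om a b) (a + b).
End Laurent.

(* The algebra homomorphism determined by sending each generator x_i to a
   Laurent monomial x^(V i) (V : integer matrix whose rows are exponent
   vectors): it sends x^a to x^(a *m V). *)
Definition lmonomap (K : fieldType) (m n : nat) (V : 'M[int]_(m, n))
  (p : laurent K m) : laurent K n :=
  \sum_(a <- msupp p) lmono (p@_a) (a *m V).

Definition skew_of (K : fieldType) (n : nat) (up : nat -> nat -> int)
  : 'M[K]_n :=
  \matrix_(i, j) ((if (i < j)%N then up i j
                   else if (j < i)%N then - up j i else 0)%:~R / 4%:R).

(* A_IV: variables a b c d e f h  = indices 0 1 2 3 4 5 6.
   Numerators over 4 of {x_i,x_j}/(x_i x_j) for i < j. *)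
Local Open Scope nat_scope.
Definition upIV (i j : nat) : int :=
  match i, j with
  | 0, 2 => (-2)%R | 0, 3 => (-2)%R | 0, 5 => (2)%R | 0, 6 => (2)%R
  | 1, 2 => (1)%R | 1, 4 => (1)%R | 1, 5 => (1)%R | 1, 6 => (-1)%R
  | 2, 3 => (-1)%R | 2, 4 => (1)%R | 2, 6 => (1)%R
  | 3, 4 => (-1)%R | 3, 5 => (1)%R | 3, 6 => (1)%R
  | 4, 5 => (-1)%R
  | 5, 6 => (1)%R
  | _, _ => (0)%R
  end.

(* A_II: variables a b c d e f g h i = indices 0 .. 8. *)
Definition upII (i j : nat) : int :=
  match i, j with
  | 0, 2 => (-1)%R | 0, 3 => (-1)%R | 0, 5 => (1)%R | 0, 6 => (-1)%R | 0, 7 => (1)%R | 0, 8 => (1)%R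
  | 1, 2 => (1)%R | 1, 4 => (1)%R | 1, 5 => (1)%R | 1, 7 => (-1)%R
  | 2, 3 => (-1)%R | 2, 4 => (1)%R | 2, 5 => (-1)%R | 2, 8 => (1)%R
  | 3, 4 => (-1)%R | 3, 8 => (1)%R
  | 4, 5 => (-1)%R
  | 5, 6 => (-1)%R | 5, 7 => (1)%R
  | 6, 7 => (1)%R | 6, 8 => (-1)%R
  | _, _ => (0)%R
  end.

Definition OmIV (K : fieldType) : 'M[K]_7 := @skew_of K 7 upIV.
Definition OmII (K : fieldType) : 'M[K]_9 := @skew_of K 9 upII.

(* images of the generators of A_IV as exponent vectors in A_II:
   a_IV -> a g, b_IV -> b, c_IV -> c g, d_IV -> d g, e_IV -> e,
   f_IV -> f, h_IV -> h. *)
Definition imgIV (i j : nat) : int :=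
  match i, j with
  | 0, 0 => (1)%R | 0, 6 => (1)%R
  | 1, 1 => (1)%R
  | 2, 2 => (1)%R | 2, 6 => (1)%R
  | 3, 3 => (1)%R | 3, 6 => (1)%R
  | 4, 4 => (1)%R
  | 5, 5 => (1)%R
  | 6, 7 => (1)%R
  | _, _ => (0)%R
  end.

Local Open Scope ring_scope.
Definition VIV : 'M[int]_(7, 9) := \matrix_(i, j) imgIV i j.

Definition phiIV (K : fieldType) : laurent K 7 -> laurent K 9 :=
  @lmonomap K 7 9 VIV.

(* The map sends the monomial x^a to x^(a V), where the rows of the integer
   matrix V are the exponent vectors of the images of the generators.  Both
   the product and the log-canonical bracket are "twisted" bilinear products
   x^a * x^b = w(a, b) x^(a+b), with weight w = 1 resp. w(a, b) = a Om b^T;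
   so the map preserves them as soon as the weights are compatible, which for
   the bracket is the matrix identity V Om_II V^T = Om_IV.  Injectivity holds
   because V has an integer right inverse, so a -> a V is injective. *)
From HB Require Import structures.
From mathcomp Require Import all_boot all_order all_algebra ring.
From mathcomp Require Import finmap.
From mathcomp.multinomials Require Import monalg.
Set Implicit Arguments. Unset Strict Implicit. Unset Printing Implicit Defensive.
Import Order.TTheory GRing.Theory Num.Theory.
Local Open Scope ring_scope.

Definition lsum (K : fieldType) (m : nat) (V : lmodType K)
  (F : K -> expo m -> V) (p : laurent K m) : V := \sum_(a <- msupp p) F p@_a a.

Section LaurentSum.
Variables (K : fieldType) (m : nat) (V : lmodType K).
Implicit Types (F G : K -> expo m -> V) (p q : laurent K m).

Lemma eq_lsum F G p : F =2 G -> lsum F p = lsum G p.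
Proof. by move=> FG; apply: eq_bigr => a _; apply: FG. Qed.

Lemma lsumDF F G p : lsum (fun c a => F c a + G c a) p = lsum F p + lsum G p.
Proof. exact: big_split. Qed.

Variable F : K -> expo m -> V.
Hypothesis FD : forall x y a, F (x + y) a = F x a + F y a.

Let F0 a : F 0 a = 0.
Proof. by apply: (@addrI _ (F 0 a)); rewrite -FD !addr0. Qed.

Lemma lsumEw (d : {fset expo m}) p :
  (msupp p `<=` d)%fset -> lsum F p = \sum_(a <- d) F p@_a a.
Proof.
by move=> le; rewrite /lsum (big_fset_incl _ le) // => a _ /mcoeff_outdom ->; rewrite F0.
Qed.

Lemma lsumD p q : lsum F (p + q) = lsum F p + lsum F q.
Proof.
pose d := (msupp p `|` msupp q)%fset.
rewrite (lsumEw (msuppD_le p q)) (@lsumEw d) ?fsubsetUl // (@lsumEw d) ?fsubsetUr //.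
by rewrite -big_split; apply: eq_bigr => a _; rewrite mcoeffD FD.
Qed.

Lemma lsum0 : lsum F 0 = 0.
Proof. by rewrite /lsum msupp0 big_seq_fset0. Qed.

Lemma lsum_sum (I : Type) (r : seq I) (f : I -> laurent K m) :
  lsum F (\sum_(i <- r) f i) = \sum_(i <- r) lsum F (f i).
Proof. by elim: r => [|i r IH]; rewrite ?big_nil ?lsum0 // !big_cons lsumD IH. Qed.

Lemma lsumU c a : lsum F (lmono c a) = F c a.
Proof. by rewrite (lsumEw msuppU_le) big_seq_fset1 mcoeffUU. Qed.

Lemma lsumZ : (forall c x a, F (c * x) a = c *: F x a) ->
  forall c p, lsum F (c *: p) = c *: lsum F p.
Proof.
move=> FZ c p; rewrite (lsumEw (msuppZ_le c p)) /lsum scaler_sumr.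
by apply: eq_bigr => a _; rewrite mcoeffZ FZ.
Qed.
End LaurentSum.

Section Lmono.
Variables (K : fieldType) (n : nat).

Lemma lmonoD (x y : K) (a : expo n) : lmono (x + y) a = lmono x a + lmono y a.
Proof. exact: monalgUD. Qed.

Lemma mcoeff_lmono (x : K) (a b : expo n) : (lmono x a)@_b = x *+ (a == b).
Proof. exact: mcoeffU. Qed.

Lemma lmonoZ (c x : K) (a : expo n) : lmono (c * x) a = c *: lmono x a.
Proof. by apply/malgP => b; rewrite mcoeffZ [in RHS]mcoeff_lmono mcoeff_lmono mulrnAr. Qed.
End Lmono.

Section TwistedProduct.
Variables (K : fieldType) (n : nat) (w : expo n -> expo n -> K).

Definition lprod (p q : laurent K n) : laurent K n :=
  lsum (fun x a => lsum (fun y b => lmono (x * y * w a b) (a + b)) q) p.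

Let termDl x y a z b : lmono ((x + y) * z * w a b) (a + b) =
  lmono (x * z * w a b) (a + b) + lmono (y * z * w a b) (a + b).
Proof. by rewrite !mulrDl lmonoD. Qed.

Let termDr x a y z b : lmono (x * (y + z) * w a b) (a + b) =
  lmono (x * y * w a b) (a + b) + lmono (x * z * w a b) (a + b).
Proof. by rewrite mulrDr mulrDl lmonoD. Qed.

Let rowDl q x y a :
  lsum (fun z b => lmono ((x + y) * z * w a b) (a + b)) q =
  lsum (fun z b => lmono (x * z * w a b) (a + b)) q +
  lsum (fun z b => lmono (y * z * w a b) (a + b)) q.
Proof. by rewrite -lsumDF; apply: eq_lsum => z b; apply: termDl. Qed.

Lemma lprodDl p1 p2 q : lprod (p1 + p2) q = lprod p1 q + lprod p2 q.
Proof. by apply: lsumD; apply: rowDl. Qed.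

Lemma lprodDr p q1 q2 : lprod p (q1 + q2) = lprod p q1 + lprod p q2.
Proof. by rewrite /lprod -lsumDF; apply: eq_lsum => x a; apply: lsumD; apply: termDr. Qed.

Lemma lprod_suml (I : Type) (r : seq I) (f : I -> laurent K n) q :
  lprod (\sum_(i <- r) f i) q = \sum_(i <- r) lprod (f i) q.
Proof.
elim: r => [|i r IH]; last by rewrite !big_cons lprodDl IH.
by rewrite !big_nil /lprod /lsum msupp0 big_seq_fset0.
Qed.

Lemma lprod_sumr (I : Type) (r : seq I) (f : I -> laurent K n) p :
  lprod p (\sum_(i <- r) f i) = \sum_(i <- r) lprod p (f i).
Proof.
elim: r => [|i r IH]; last by rewrite !big_cons lprodDr IH.
by rewrite !big_nil /lprod /lsum big1 // => a _; rewrite msupp0 big_seq_fset0.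
Qed.

Lemma lprodUU x y a b : lprod (lmono x a) (lmono y b) = lmono (x * y * w a b) (a + b).
Proof.
rewrite /lprod lsumU; last exact: rowDl.
by rewrite lsumU; last exact: termDr.
Qed.
End TwistedProduct.

Lemma lmul_lprod (K : fieldType) n (p q : laurent K n) :
  lmul p q = lprod (fun _ _ => 1) p q.
Proof. by apply: eq_bigr => a _; apply: eq_bigr => b _; rewrite mulr1. Qed.

Lemma lbracket_lprod (K : fieldType) n (Om : 'M[K]_n) (p q : laurent K n) :
  lbracket Om p q = lprod (lpair Om) p q.
Proof. by []. Qed.

Section MonomialMap.
Variables (K : fieldType) (m n : nat) (V : 'M[int]_(m, n)).

Implicit Types (p q : laurent K m).

Let F (c : K) (a : expo m) : laurent K n := lmono c (a *m V).

Lemma lmonomapD p q : lmonomap V (p + q) = lmonomap V p + lmonomap V q.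
Proof. by apply: (lsumD (F := F)) => x y a; apply: lmonoD. Qed.

Lemma lmonomapZ (c : K) p : lmonomap V (c *: p) = c *: lmonomap V p.
Proof. by apply: (lsumZ (F := F)) => *; [apply: lmonoD | apply: lmonoZ]. Qed.

Lemma lmonomap_sum (I : Type) (r : seq I) (f : I -> laurent K m) :
  lmonomap V (\sum_(i <- r) f i) = \sum_(i <- r) lmonomap V (f i).
Proof. by apply: (lsum_sum (F := F)) => x y a; apply: lmonoD. Qed.

Lemma lmonomapU (c : K) a : lmonomap V (lmono c a) = lmono c (a *m V).
Proof. by apply: (lsumU (F := F)) => x y b; apply: lmonoD. Qed.

Lemma lmonomap_lone : lmonomap V (@lone K m) = @lone K n.
Proof. by rewrite lmonomapU mul0mx. Qed.

Lemma lmonomap_lprod (w : expo m -> expo m -> K) (w' : expo n -> expo n -> K) :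
  (forall a b, w' (a *m V) (b *m V) = w a b) ->
  forall p q, lmonomap V (lprod w p q) = lprod w' (lmonomap V p) (lmonomap V q).
Proof.
move=> ww' p q; rewrite lmonomap_sum [in RHS]/lmonomap lprod_suml.
apply: eq_bigr => a _; rewrite lmonomap_sum lprod_sumr; apply: eq_bigr => b _.
by rewrite lmonomapU lprodUU ww' mulmxDl.
Qed.

Hypothesis injV : injective (mulmx^~ V : expo m -> expo n).

Lemma mcoeff_lmonomap (p : laurent K m) a : (lmonomap V p)@_(a *m V) = p@_a.
Proof.
rewrite /lmonomap [in RHS](monalgE p) !raddf_sum; apply: eq_bigr => b _.
by rewrite /= mcoeff_lmono mcoeffU (inj_eq injV).
Qed.

Lemma lmonomap_inj : injective (lmonomap V : laurent K m -> laurent K n).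
Proof. by move=> p q pq; apply/malgP => a; rewrite -!mcoeff_lmonomap pq. Qed.
End MonomialMap.

Lemma mulmx_rinv_inj (m n : nat) (V : 'M[int]_(m, n)) (W : 'M[int]_(n, m)) :
  V *m W = 1%:M -> injective (mulmx^~ V : expo m -> expo n).
Proof. by move=> VW a b /= abV; rewrite -(mulmx1 a) -(mulmx1 b) -VW !mulmxA abV. Qed.

Section Pairing.
Variables (K : fieldType).

Lemma lpairE n (Om : 'M[K]_n) a b :
  lpair Om a b = (map_mx intr a *m Om *m (map_mx intr b)^T) ord0 ord0.
Proof.
rewrite /lpair [RHS]mxE exchange_big /=; apply: eq_bigr => j _.
rewrite !mxE big_distrl /=; apply: eq_bigr => i _; rewrite !mxE; ring.
Qed.

Lemma lpair_mulmx m n (V : 'M[int]_(m, n)) (Om : 'M[K]_n) a b :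
  lpair Om (a *m V) (b *m V) = lpair (map_mx intr V *m Om *m (map_mx intr V)^T) a b.
Proof. by rewrite !lpairE !map_mxM trmx_mul !mulmxA. Qed.
End Pairing.

Lemma mulmx_trmx_entry (R : comNzRingType) m n (A B : 'M[R]_(m, n)) (S : 'M[R]_n) i j :
  (A *m S *m B^T) i j = \sum_k \sum_l A i k * S k l * B j l.
Proof.
rewrite mxE [RHS]exchange_big /=; apply: eq_bigr => l _.
by rewrite !mxE big_distrl.
Qed.

Definition skewz (up : nat -> nat -> int) (i j : nat) : int :=
  if (i < j)%N then up i j else if (j < i)%N then - up j i else 0.

Definition skewz_mx n (up : nat -> nat -> int) : 'M[int]_n := \matrix_(i, j) skewz up i j.

Lemma skew_ofE (K : fieldType) n (up : nat -> nat -> int) :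
  skew_of K n up = 4%:R^-1 *: map_mx intr (skewz_mx n up).
Proof. by apply/matrixP => i j; rewrite !mxE mulrC. Qed.

Lemma VIV_skewz_entry (i j : 'I_7) :
  \sum_(k < 9) \sum_(l < 9) imgIV i k * skewz upII k l * imgIV j l = skewz upIV i j.
Proof.
rewrite !big_ord_recl !big_ord0.
by case: i => [[|[|[|[|[|[|[|i]]]]]]] Hi] //; case: j => [[|[|[|[|[|[|[|j]]]]]]] Hj].
Qed.

Lemma VIV_skewz : VIV *m skewz_mx 9 upII *m VIV^T = skewz_mx 7 upIV.
Proof.
apply/matrixP => i j; rewrite mulmx_trmx_entry mxE -VIV_skewz_entry.
by apply: eq_bigr => k _; apply: eq_bigr => l _; rewrite !mxE.
Qed.

Lemma OmIV_congr (K : fieldType) :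
  map_mx intr VIV *m OmII K *m (map_mx intr VIV)^T = OmIV K.
Proof.
rewrite /OmII /OmIV !skew_ofE -scalemxAr -scalemxAl map_trmx -!map_mxM.
by rewrite VIV_skewz.
Qed.

Definition retrIV (k i : nat) : int :=
  match k, i with
  | 0, 0 | 1, 1 | 2, 2 | 3, 3 | 4, 4 | 5, 5 | 7, 6 => 1
  | _, _ => 0
  end.

Lemma VIV_rinv : VIV *m (\matrix_(k, i) retrIV k i) = 1%:M.
Proof.
apply/matrixP => i j; rewrite !mxE !big_ord_recl big_ord0 !mxE.
by case: i => [[|[|[|[|[|[|[|i]]]]]]] Hi] //; case: j => [[|[|[|[|[|[|[|j]]]]]]] Hj].
Qed.

Theorem mainTheorem8 (K : fieldType) (charK0 : [pchar K] =i pred0) :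
  let phi := @phiIV K in
  (forall p q, phi (p + q) = phi p + phi q) /\
  (forall (c : K) p, phi (c *: p) = c *: phi p) /\
  (forall p q, phi (lmul p q) = lmul (phi p) (phi q)) /\
  phi (@lone K 7) = @lone K 9 /\
  (forall p q,
     phi (lbracket (@OmIV K) p q) = lbracket (@OmII K) (phi p) (phi q)) /\
  injective phi.
Proof.
move=> phi; split; first exact: lmonomapD.
split; first exact: lmonomapZ.
split; first by move=> p q; rewrite !lmul_lprod; apply: lmonomap_lprod.
split; first exact: lmonomap_lone.
split.
  move=> p q; rewrite !lbracket_lprod; apply: lmonomap_lprod => a b.
  by rewrite lpair_mulmx OmIV_congr.
exact/lmonomap_inj/mulmx_rinv_inj/VIV_rinv.
Qed.
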